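(* Let $K$ be an $n$-dimensional oriented, well-centered, manifold-like simplicial complex with boundary $\partial K$ and circumcentric dual complex, and let $p,q$ be positive integers with $p+q=n+1$. Let $\tilde{\mathcal F}^d_{p,q}=\Omega_d^p(K)\times\Omega_d^q(\star_{\mathrm i}K)\times\Omega_d^{n-p}(\partial(\star K))$ and $\tilde{\mathcal E}^d_{p,q}=\Omega_d^{n-p}(\star_{\mathrm i}K)\times\Omega_d^{n-q}(K)\times\Omega_d^{n-q}(\partial K)$, with the symmetric bilinear form $$\langle\!\langle(f_p^1,\hat f_q^1,\hat f_b^1,\hat e_p^1,e_q^1,e_b^1),(f_p^2,\hat f_q^2,\hat f_b^2,\hat e_p^2,e_q^2,e_b^2)\rangle\!\rangle_{\tilde d}=\langle\hat e_p^1\wedge f_p^2+e_q^1\wedge\hat f_q^2+\hat e_p^2\wedge f_p^1+e_q^2\wedge\hat f_q^1,K\rangle+\langle e_b^1\wedge\hat f_b^2+e_b^2\wedge\hat f_b^1,\partial K\rangle .$$ Define $\tilde{\mathcal D}_d\subset\tilde{\mathcal F}^d_{p,q}\times\tilde{\mathcal E}^d_{p,q}$ as the set of $(f_p,\hat f_q,\hat f_b,\hat e_p,e_q,e_b)$ such that $$f_p=(-1)^{pq+1}\mathbf d e_q,\qquad \hat f_q=\mathbf d_{\mathrm i}\hat e_p+\mathbf d_{\mathrm b}\hat f_b,\qquad e_b=(-1)^p\,e_q|_{\partial K}.$$ Then $\tilde{\mathcal D}_d=\tilde{\mathcal D}_d^{\perp}$ with respect to $\langle\!\langle\cdot,\cdot\rangle\!\rangle_{\tilde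 d}$, i.e. $\tilde{\mathcal D}_d$ is a Dirac structure.
   Context: Setting. $K$ is an $n$-dimensional manifold-like simplicial complex (every simplex is a face of some $n$-simplex), oriented ($n$-simplices sharing an $(n-1)$-face are coherently oriented, lower-dimensional simplices are individually oriented) and well-centered (every simplex contains its circumcenter in its interior). $\partial K$ is the $(n-1)$-dimensional boundary subcomplex: the $(n-1)$-simplices that are faces of exactly one $n$-simplex, together with all their faces. For simplices $\sigma^{j-1}\prec\sigma^{j}$ let $[\sigma^{j-1}:\sigma^{j}]\in\{\pm1\}$ be the coefficient of $\sigma^{j-1}$ in $\partial[v_0,\dots,v_j]=\sum_i(-1)^i[v_0,\dots,\widehat{v_i},\dots,v_j]$. Dual cells. Each simplex $\sigma^j\in K$ has a circumcentric interior dual $(n-j)$-cell $\star_{\mathrm i}\sigma^j$; each $\tau^j\in\partial K$ has a boundary dual $(n-1-j)$-cell $\star_{\mathrm b}\tau^j$ (its circumcentric dual within $\partial K$). Discrete forms. $\Omega_d^j(K)$ (resp. $\Omega_d^j(\partial K)$): real functions on the $j$-simplices of $K$ (resp. $\partial K$); $\Omega_d^m(\star_{\mathrm i}K)$: real functions on interior dual $m$-cells $\star_{\mathrm i}\sigma^{n-m}$; $\Omega_d^m(\partial(\star K))$: real functions on boundary dual $m$-cells $\star_{\mathrm b}\tau^{n-1-m}$, $\tau\in\partial K$. For primal $\alpha$, $\alpha|_{\partial K}$ is its restriction to simplices of $\partial K$. Derivatives. Primal: $(\mathbf d\alpha)(\sigma^{j})=\sum_{\sigma^{j-1}\prec\sigma^{j}}[\sigma^{j-1}:\sigma^{j}]\alpha(\sigma^{j-1})$.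 Dual: for $\hat\beta_{\mathrm i}\in\Omega_d^{m}(\star_{\mathrm i}K)$, $\hat\beta_{\mathrm b}\in\Omega_d^{m}(\partial(\star K))$, $m\le n-1$, with $j=n-m$: $(\mathbf d_{\mathrm i}\hat\beta_{\mathrm i})(\star_{\mathrm i}\sigma^{j-1})=(-1)^{j}\sum_{\sigma^{j}\succ\sigma^{j-1}}[\sigma^{j-1}:\sigma^{j}]\hat\beta_{\mathrm i}(\star_{\mathrm i}\sigma^{j})$, and $(\mathbf d_{\mathrm b}\hat\beta_{\mathrm b})(\star_{\mathrm i}\sigma^{j-1})=(-1)^{j-1}\hat\beta_{\mathrm b}(\star_{\mathrm b}\sigma^{j-1})$ if $\sigma^{j-1}\in\partial K$, $0$ otherwise; both lie in $\Omega_d^{m+1}(\star_{\mathrm i}K)$. Wedge pairings (extended bilinearly). For $\alpha\in\Omega_d^j(K)$, $\hat\beta\in\Omega_d^{n-j}(\star_{\mathrm i}K)$: $\langle\alpha\wedge\hat\beta,K\rangle=\sum_{\sigma^j\in K}\alpha(\sigma^j)\hat\beta(\star_{\mathrm i}\sigma^j)$, $\langle\hat\beta\wedge\alpha,K\rangle=(-1)^{j(n-j)}\langle\alpha\wedge\hat\beta,K\rangle$. For $\alpha\in\Omega_d^j(\partial K)$, $\hat\gamma\in\Omega_d^{n-1-j}(\partial(\star K))$: $\langle\alpha\wedge\hat\gamma,\partial K\rangle=\sum_{\tau^j\in\partial K}\alpha(\tau^j)\hat\gamma(\star_{\mathrm b}\tau^j)$, $\langle\hat\gamma\wedge\alpha,\partial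 K\rangle=(-1)^{j(n-1-j)}\langle\alpha\wedge\hat\gamma,\partial K\rangle$. A Dirac structure is a linear subspace $\mathcal D\subset\mathcal F\times\mathcal E$ with $\mathcal D=\mathcal D^\perp$ for the given symmetric bilinear form. *)

From HB Require Import structures.
From mathcomp Require Import all_boot all_order all_algebra.
From mathcomp Require Import reals.
Set Implicit Arguments. Unset Strict Implicit. Unset Printing Implicit Defensive.
Import Order.TTheory GRing.Theory Num.Theory.
Local Open Scope ring_scope.

Section DEC.
Variables (R : realType) (V : finType).

Definition simp (K : {set {set V}}) (j : nat) : {set {set V}} :=
  [set s in K | #|s| == j.+1]%N.

Definition abstract_complex (K : {set {set V}}) : Prop :=
  (forall s : {set V}, s \in K -> s != set0) /\
  (forall s t : {set V}, s \in K -> t \subset s -> t != set0 -> t \in K).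

Definition affine_indep (N : nat) (pos : V -> 'rV[R]_N) (s : {set V}) : Prop :=
  forall c : V -> R, \sum_(v in s) c v = 0 -> \sum_(v in s) c v *: pos v = 0 ->
    forall v, v \in s -> c v = 0.

Definition in_hull (N : nat) (pos : V -> 'rV[R]_N) (s : {set V}) (x : 'rV[R]_N) :=
  exists l : V -> R, (forall v, v \in s -> 0 <= l v) /\ \sum_(v in s) l v = 1 /\
    x = \sum_(v in s) l v *: pos v.

(* geometric simplicial complex: simplices are affinely independent and any two
   simplices meet in a common face (possibly empty) *)
Definition geometric_complex (N : nat) (pos : V -> 'rV[R]_N) (K : {set {set V}}) :=
  abstract_complex K /\ (forall s, s \in K -> affine_indep pos s) /\
  (forall s t x, s \in K -> t \in K -> in_hull pos s x -> in_hull pos t x ->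
     in_hull pos (s :&: t) x).

Definition sqdist (N : nat) (x y : 'rV[R]_N) : R := \sum_(i < N) (x 0 i - y 0 i) ^+ 2.

(* every simplex contains its circumcenter (the point of its affine hull
   equidistant from its vertices) in its (relative) interior *)
Definition well_centered (N : nat) (pos : V -> 'rV[R]_N) (K : {set {set V}}) :=
  forall s, s \in K -> exists l : V -> R,
    (forall v, v \in s -> 0 < l v) /\ \sum_(v in s) l v = 1 /\
    forall v w, v \in s -> w \in s ->
      sqdist (\sum_(u in s) l u *: pos u) (pos v) =
      sqdist (\sum_(u in s) l u *: pos u) (pos w).

Definition manifold_like (n : nat) (K : {set {set V}}) : Prop :=
  simp K n != set0 /\ forall s, s \in K -> exists2 t, t \in simp K n & s \subset t.

Definition orientation (K : {set {set V}}) (ord : {set V} -> seq V) : Prop :=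
  forall s, s \in K -> perm_eq (ord s) (enum s).

(* parity of the permutation between two orderings a, b of the same vertex set *)
Definition relsign (a b : seq V) : R :=
  (-1) ^+ (\sum_(x <- a) \sum_(y <- a)
             ((index x a < index y a) && (index y b < index x b)))%N.

(* [t : s] : coefficient of (the oriented) t in the boundary of (the oriented) s,
   computed from d[v0..vj] = sum_i (-1)^i [v0..^vi..vj]; 0 if t is not a facet *)
Definition incidence (ord : {set V} -> seq V) (t s : {set V}) : R :=
  if (t \subset s) && (#|s| == #|t|.+1)%N then
    (-1) ^+ (find (fun x => x \notin t) (ord s)) *
    relsign [seq x <- ord s | x \in t] (ord t)
  else 0.

Definition coherent (n : nat) (K : {set {set V}}) (ord : {set V} -> seq V) : Prop :=
  forall s1 s2 t, s1 \in simp K n -> s2 \in simp K n -> s1 != s2 ->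
    t \in simp K n.-1 -> t \subset s1 -> t \subset s2 ->
    incidence ord t s1 = - incidence ord t s2.

Definition bdry_facets (n : nat) (K : {set {set V}}) : {set {set V}} :=
  [set t in simp K n.-1 | #|[set s in simp K n | t \subset s]| == 1%N].

Definition bdry (n : nat) (K : {set {set V}}) : {set {set V}} :=
  [set t in K | [exists u in bdry_facets n K, t \subset u]].

(* ---------- discrete forms ----------
   A discrete form is a real function on cells; primal cells are simplices, the
   interior dual cell star_i s is indexed by s in K, the boundary dual cell star_b t is
   indexed by t in bdry K.  form_on S f : f lives on the cells indexed by S. *)
Definition form_on (S : {set {set V}}) (f : {ffun {set V} -> R}) : Prop :=
  forall s, s \notin S -> f s = 0.

Variables (n : nat) (K : {set {set V}}) (ord : {set V} -> seq V).

Definition pd (j : nat) (a : {ffun {set V} -> R}) : {ffun {set V} -> R} :=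
  [ffun s => if s \in simp K j.+1 then
               \sum_(t in simp K j) incidence ord t s * a t else 0].

(* d_i : Omega^m(star_i K) -> Omega^(m+1)(star_i K), with j = n - m *)
Definition d_i (m : nat) (b : {ffun {set V} -> R}) : {ffun {set V} -> R} :=
  [ffun t => if t \in simp K (n - m).-1 then
               (-1) ^+ (n - m) * \sum_(s in simp K (n - m)) incidence ord t s * b s
             else 0].

(* d_b : Omega^m(boundary of star K) -> Omega^(m+1)(star_i K), with j = n - m *)
Definition d_b (m : nat) (b : {ffun {set V} -> R}) : {ffun {set V} -> R} :=
  [ffun t => if t \in simp K (n - m).-1 then
               (if t \in bdry n K then (-1) ^+ (n - m).-1 * b t else 0)
             else 0].

Definition restr_bdry (a : {ffun {set V} -> R}) : {ffun {set V} -> R} :=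
  [ffun s => if s \in bdry n K then a s else 0].

(* <alpha /\ beta_hat, K> for alpha primal j-form, beta_hat dual (n-j)-form *)
Definition wedgePD (j : nat) (a b : {ffun {set V} -> R}) : R :=
  \sum_(s in simp K j) a s * b s.
(* <beta_hat /\ alpha, K> = (-1)^(j(n-j)) <alpha /\ beta_hat, K> *)
Definition wedgeDP (j : nat) (b a : {ffun {set V} -> R}) : R :=
  (-1) ^+ (j * (n - j)) * wedgePD j a b.
(* <alpha /\ gamma_hat, boundary K> for alpha primal j-form on the boundary *)
Definition wedgeB (j : nat) (a g : {ffun {set V} -> R}) : R :=
  \sum_(t in simp (bdry n K) j) a t * g t.

Record FE := mkFE { f_p : {ffun {set V} -> R}; fhat_q : {ffun {set V} -> R};
                    fhat_b : {ffun {set V} -> R}; ehat_p : {ffun {set V} -> R};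
                    e_q : {ffun {set V} -> R}; e_b : {ffun {set V} -> R} }.

Variables (p q : nat).

Definition inFE (x : FE) : Prop :=
  [/\ form_on (simp K p) (f_p x),
       form_on (simp K (n - q)) (fhat_q x)
     & form_on (simp (bdry n K) (n.-1 - (n - p))) (fhat_b x)]
  /\ [/\ form_on (simp K (n - (n - p))) (ehat_p x),
       form_on (simp K (n - q)) (e_q x)
     & form_on (simp (bdry n K) (n - q)) (e_b x)].

Definition pairing (x y : FE) : R :=
  wedgeDP p (ehat_p x) (f_p y) + wedgePD (n - q) (e_q x) (fhat_q y)
  + wedgeDP p (ehat_p y) (f_p x) + wedgePD (n - q) (e_q y) (fhat_q x)
  + (wedgeB (n - q) (e_b x) (fhat_b y) + wedgeB (n - q) (e_b y) (fhat_b x)).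

Definition Dirac_D (x : FE) : Prop :=
  [/\ inFE x,
      f_p x = [ffun s => (-1) ^+ (p * q + 1) * pd (n - q) (e_q x) s],
      fhat_q x = [ffun s => d_i (n - p) (ehat_p x) s + d_b (n - p) (fhat_b x) s]
    & e_b x = [ffun s => (-1) ^+ p * restr_bdry (e_q x) s]].

Definition Dirac_D_perp (x : FE) : Prop :=
  inFE x /\ forall y, Dirac_D y -> pairing x y = 0.

End DEC.

From HB Require Import structures.
From mathcomp Require Import all_boot all_order all_algebra.
From mathcomp Require Import reals zify ring lra.

(* For [y] in the Dirac subspace, summation by parts (the interior dual derivative
   is, up to sign, the transpose of the primal one, and the boundary dual derivative
   is restriction to the boundary) collapses the pairing [<<x, y>>] to the wedge
   pairings of the free components [(e_q, ehat_p, fhat_b)] of [y] against the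
   residuals of [x] in the three defining equations.  Hence the subspace is
   isotropic; and if [x] is orthogonal to it, the [y] whose free components are
   the residuals of [x] turns the pairing into a sum of squares, so the residuals
   vanish. *)
Import Order.TTheory GRing.Theory Num.Theory.
Local Open Scope ring_scope.

Section DiracStructure.
Variables (R : realType) (V : finType) (n : nat) (K : {set {set V}}).
Variable ord : {set V} -> seq V.

Implicit Types (a b e : {ffun {set V} -> R}) (t s : {set V}) (S : {set {set V}}).
Implicit Types (x y : FE R V).

Lemma simp_bdry i t :
  t \in bdry n K -> (t \in simp (bdry n K) i) = (t \in simp K i).
Proof.
move=> tb; have tK : t \in K by move: tb; rewrite inE => /andP[].
by rewrite /simp [in LHS]in_set [in RHS]in_set tb tK.
Qed.

Lemma simp_bdry_mem i t : t \in simp (bdry n K) i -> t \in bdry n K.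
Proof. by rewrite inE => /andP[]. Qed.

Lemma wedgePDC i a b : wedgePD K i a b = wedgePD K i b a.
Proof. by apply: eq_bigr => s _; rewrite mulrC. Qed.

Lemma wedgeBC i a b : wedgeB n K i a b = wedgeB n K i b a.
Proof. by apply: eq_bigr => s _; rewrite mulrC. Qed.

Lemma wedgePDBr i a b1 b2 :
  wedgePD K i a (b1 - b2) = wedgePD K i a b1 - wedgePD K i a b2.
Proof. by rewrite /wedgePD -sumrB; apply: eq_bigr => s _; rewrite !ffunE mulrBr. Qed.

Lemma wedgeBBr i a b1 b2 :
  wedgeB n K i a (b1 - b2) = wedgeB n K i a b1 - wedgeB n K i a b2.
Proof. by rewrite /wedgeB -sumrB; apply: eq_bigr => s _; rewrite !ffunE mulrBr. Qed.

Lemma wedgePDZl i c a b :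
  wedgePD K i [ffun s => c * a s] b = c * wedgePD K i a b.
Proof. by rewrite /wedgePD big_distrr /=; apply: eq_bigr => s _; rewrite ffunE mulrA. Qed.

Lemma wedgePDDr i a b1 b2 :
  wedgePD K i a [ffun s => b1 s + b2 s] = wedgePD K i a b1 + wedgePD K i a b2.
Proof. by rewrite /wedgePD -big_split; apply: eq_bigr => s _; rewrite ffunE mulrDr. Qed.

Lemma wedgeB_restr_bdry i c a b :
  wedgeB n K i [ffun s => c * restr_bdry n K a s] b = c * wedgeB n K i a b.
Proof.
rewrite /wedgeB big_distrr /=; apply: eq_bigr => s /simp_bdry_mem sb.
by rewrite !ffunE sb mulrA.
Qed.

Definition pd_adj i b : {ffun {set V} -> R} :=
  [ffun t => \sum_(s in simp K i.+1) incidence R ord t s * b s].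

Lemma wedgePD_pd i a b :
  wedgePD K i.+1 (pd K ord i a) b = wedgePD K i a (pd_adj i b).
Proof.
rewrite /wedgePD; under eq_bigr => s hs do rewrite ffunE hs big_distrl.
rewrite exchange_big; apply: eq_bigr => t _; rewrite ffunE big_distrr /=.
by apply: eq_bigr => s _; rewrite mulrCA mulrA.
Qed.

Lemma form_onB {S a b} : form_on S a -> form_on S b -> form_on S (a - b).
Proof. by move=> ha hb s hs; rewrite !ffunE ha // hb // subrr. Qed.

Lemma form_onZ {S} c {a} : form_on S a -> form_on S [ffun s => c * a s].
Proof. by move=> ha s hs; rewrite ffunE ha // mulr0. Qed.

Lemma pd_on i a : form_on (simp K i.+1) (pd K ord i a).
Proof. by move=> s hs; rewrite ffunE (negbTE hs). Qed.

Lemma sum_sqr_ge0 S a : 0 <= \sum_(s in S) a s * a s.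
Proof. by apply: sumr_ge0 => s _; rewrite -expr2 sqr_ge0. Qed.

Lemma sum_sqr_eq0 {S a} : form_on S a -> \sum_(s in S) a s * a s = 0 -> a = 0.
Proof.
move=> ha h0; apply/ffunP => s; rewrite ffunE.
have [sS | /ha //] := boolP (s \in S).
have /eqP := psumr_eq0P (fun s _ => sqr_ge0 (a s)) h0 sS.
by rewrite mulf_eq0 orbb => /eqP.
Qed.

Variables (j k : nat).
Hypothesis n_eq : (j + k).+1 = n.

Local Notation p := j.+1.
Local Notation q := k.+1.

Lemma subn_q : (n - q = j)%N. Proof. lia. Qed.
Lemma subn_p : (n - p = k)%N. Proof. lia. Qed.
Lemma subnK_p : (n - (n - p) = p)%N. Proof. lia. Qed.
Lemma subn_pred_p : (n.-1 - (n - p) = j)%N. Proof. lia. Qed.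

Lemma wedgePD_d_i a b :
  wedgePD K j a (d_i n K ord (n - p) b) = (-1) ^+ p * wedgePD K j a (pd_adj j b).
Proof.
rewrite /wedgePD big_distrr /=; apply: eq_bigr => t ht.
by rewrite !ffunE subnK_p /= ht mulrCA.
Qed.

Lemma wedgePD_d_b a b :
  wedgePD K j a (d_b n K (n - p) b) = (-1) ^+ j * wedgeB n K j a b.
Proof.
rewrite /wedgePD /wedgeB big_distrr big_mkcond [in RHS]big_mkcond /=.
apply: eq_bigr => t _; rewrite ffunE subnK_p /=.
case tb: (t \in bdry n K); last first.
  by rewrite if_same mulr0 if_same; case: ifP => // /simp_bdry_mem; rewrite tb.
by rewrite simp_bdry //; case: (t \in simp K j); rewrite ?mulr0 // mulrCA.
Qed.

Lemma signr_wedgeDP_graph :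
  (-1) ^+ (p * k) * (-1) ^+ (p * q + 1) = (-1) ^+ j :> R.
Proof.
rewrite -exprD -signr_odd -[RHS]signr_odd; congr (_ ^+ (nat_of_bool _)).
have -> : (p * k + (p * q + 1) = j + (p * k + 1).*2)%N by rewrite -addnn mulnS; lia.
by rewrite oddD odd_double addbF.
Qed.

Definition graph_f_p e : {ffun {set V} -> R} :=
  [ffun s => (-1) ^+ (p * q + 1) * pd K ord (n - q) e s].
Definition graph_fhat_q eh fb : {ffun {set V} -> R} :=
  [ffun s => d_i n K ord (n - p) eh s + d_b n K (n - p) fb s].
Definition graph_e_b e : {ffun {set V} -> R} :=
  [ffun s => (-1) ^+ p * restr_bdry n K e s].

Definition residual_f_p x : {ffun {set V} -> R} := f_p x - graph_f_p (e_q x).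
Definition residual_fhat_q x : {ffun {set V} -> R} :=
  fhat_q x - graph_fhat_q (ehat_p x) (fhat_b x).
Definition residual_e_b x : {ffun {set V} -> R} := e_b x - graph_e_b (e_q x).

Definition pairing_half x y : R :=
  wedgeDP n K p (ehat_p x) (f_p y) + wedgePD K j (e_q y) (fhat_q x)
  + wedgeB n K j (e_b y) (fhat_b x).

Lemma pairing_halfE x y : pairing n K p q x y = pairing_half x y + pairing_half y x.
Proof. rewrite /pairing /pairing_half subn_q; ring. Qed.

Lemma pairing_half_graph_l x y :
  f_p y = graph_f_p (e_q y) -> e_b y = graph_e_b (e_q y) ->
  pairing_half x y = wedgePD K j (e_q y) (residual_fhat_q x).
Proof.
move=> Hf Heb; rewrite /pairing_half /wedgeDP Hf Heb /residual_fhat_q.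
rewrite wedgePDBr wedgePDDr wedgePD_d_i wedgePD_d_b wedgeB_restr_bdry.
rewrite wedgePDZl subn_q wedgePD_pd subn_p mulrA signr_wedgeDP_graph exprS; ring.
Qed.

Lemma pairing_half_graph_r x y :
  fhat_q y = graph_fhat_q (ehat_p y) (fhat_b y) ->
  pairing_half y x = (-1) ^+ (p * k) * wedgePD K p (ehat_p y) (residual_f_p x)
                     + wedgeB n K j (fhat_b y) (residual_e_b x).
Proof.
move=> Hfh; rewrite /pairing_half /wedgeDP Hfh /residual_f_p /residual_e_b.
rewrite wedgePDDr wedgePD_d_i wedgePD_d_b wedgePDBr wedgeBBr.
rewrite ![wedgeB _ _ _ (fhat_b y) _]wedgeBC wedgeB_restr_bdry.
rewrite ![wedgePD K p (ehat_p y) _]wedgePDC wedgePDZl subn_q wedgePD_pd.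
rewrite subn_p mulrBr mulrA signr_wedgeDP_graph exprS; ring.
Qed.

Lemma pairing_Dirac_D x y : Dirac_D n K ord p q y ->
  pairing n K p q x y =
    wedgePD K j (e_q y) (residual_fhat_q x)
    + (-1) ^+ (p * k) * wedgePD K p (ehat_p y) (residual_f_p x)
    + wedgeB n K j (fhat_b y) (residual_e_b x).
Proof.
case=> _ Hf Hfh Heb.
by rewrite pairing_halfE pairing_half_graph_l // pairing_half_graph_r // addrA.
Qed.

Lemma Dirac_D_residual x : Dirac_D n K ord p q x <->
  [/\ inFE n K p q x, residual_f_p x = 0, residual_fhat_q x = 0
    & residual_e_b x = 0].
Proof.
split=> -[hx Hf Hfh Heb]; split=> //.
- by rewrite /residual_f_p Hf subrr.
- by rewrite /residual_fhat_q Hfh subrr.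
- by rewrite /residual_e_b Heb subrr.
- exact: subr0_eq Hf.
- exact: subr0_eq Hfh.
- exact: subr0_eq Heb.
Qed.

Lemma inFEE x : inFE n K p q x =
  ([/\ form_on (simp K p) (f_p x), form_on (simp K j) (fhat_q x)
     & form_on (simp (bdry n K) j) (fhat_b x)]
   /\ [/\ form_on (simp K p) (ehat_p x), form_on (simp K j) (e_q x)
     & form_on (simp (bdry n K) j) (e_b x)]).
Proof. by rewrite /inFE subnK_p subn_pred_p subn_q. Qed.

Lemma graph_f_p_on e : form_on (simp K p) (graph_f_p e).
Proof. by apply: form_onZ; rewrite subn_q; apply: pd_on. Qed.

Lemma graph_fhat_q_on eh fb : form_on (simp K j) (graph_fhat_q eh fb).
Proof. by move=> t ht; rewrite !ffunE subnK_p /= (negbTE ht) addr0. Qed.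

Lemma graph_e_b_on e :
  form_on (simp K j) e -> form_on (simp (bdry n K) j) (graph_e_b e).
Proof.
move=> he t ht; rewrite !ffunE; case: ifP => tb; last by rewrite mulr0.
by rewrite he ?mulr0 // -(simp_bdry j _ tb).
Qed.

Lemma residual_on {x} : inFE n K p q x ->
  [/\ form_on (simp K p) (residual_f_p x), form_on (simp K j) (residual_fhat_q x)
    & form_on (simp (bdry n K) j) (residual_e_b x)].
Proof.
rewrite inFEE => -[[hf hfh _] [_ he heb]]; split; apply: form_onB => //.
- exact: graph_f_p_on.
- exact: graph_fhat_q_on.
- exact: graph_e_b_on.
Qed.

Lemma Dirac_D_graph {eh e fb} :
  form_on (simp K p) eh -> form_on (simp K j) e -> form_on (simp (bdry n K) j) fb ->
  Dirac_D n K ord p q (mkFE (graph_f_p e) (graph_fhat_q eh fb) fb eh e (graph_e_b e)).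
Proof.
move=> heh he hfb; split=> //; rewrite inFEE; split; split=> //=.
- exact: graph_f_p_on.
- exact: graph_fhat_q_on.
- exact: graph_e_b_on.
Qed.

Lemma Dirac_D_sub_perp x : Dirac_D n K ord p q x -> Dirac_D_perp n K ord p q x.
Proof.
move=> /Dirac_D_residual[hx rf0 rq0 rb0]; split=> // y Dy.
rewrite pairing_Dirac_D // rf0 rq0 rb0 /wedgePD /wedgeB.
by rewrite !big1 => [|s _|s _|s _]; rewrite ?ffunE ?mulr0 ?addr0.
Qed.

(* The witness pairs each residual of [x] with itself, so the pairing is a sum of squares. *)
Lemma Dirac_D_perp_sub x : Dirac_D_perp n K ord p q x -> Dirac_D n K ord p q x.
Proof.
move=> [hx hperp]; have [rf_on rq_on rb_on] := residual_on hx.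
have Dy := Dirac_D_graph (form_onZ ((-1) ^+ (p * k)) rf_on) rq_on rb_on.
have := hperp _ Dy; rewrite pairing_Dirac_D //= wedgePDZl signrMK /wedgePD /wedgeB.
have := sum_sqr_ge0 (simp K j) (residual_fhat_q x).
have := sum_sqr_ge0 (simp K p) (residual_f_p x).
have := sum_sqr_ge0 (simp (bdry n K) j) (residual_e_b x).
move=> ge0b ge0f ge0q sum0; apply/Dirac_D_residual; split=> //.
- by apply: (sum_sqr_eq0 rf_on); lra.
- by apply: (sum_sqr_eq0 rq_on); lra.
- by apply: (sum_sqr_eq0 rb_on); lra.
Qed.

End DiracStructure.

Theorem theorem3 (R : realType) (V : finType) (N : nat) (pos : V -> 'rV[R]_N)
  (K : {set {set V}}) (ord : {set V} -> seq V) (n p q : nat) :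
  geometric_complex pos K -> well_centered pos K -> manifold_like n K ->
  orientation K ord -> coherent R n K ord ->
  (0 < p)%N -> (0 < q)%N -> (p + q = n + 1)%N ->
  forall x : FE R V,
    Dirac_D n K ord p q x <-> Dirac_D_perp n K ord p q x.
Proof.
move=> _ _ _ _ _; case: p => [//|j] _; case: q => [//|k] _ hpq x.
have n_eq : (j + k).+1 = n by lia.
by split; [apply: Dirac_D_sub_perp | apply: Dirac_D_perp_sub].
Qed.
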